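(* Let $k$ be a field, $S=k[[x_1,\dots,x_d]]$, $n>1$ an integer, and $R=S^{(n)}$ the $n$-th Veronese subring of $S$. Let $L=x_1S\cap R$, which generates the divisor class group $\operatorname{Cl}(R)\cong\mathbb Z/n\mathbb Z$, and for $1\leq i\leq n-1$ let $L^{(i)}$ be the $i$-th symbolic power of $L$ (the rank one reflexive module representing $i[L]$ in $\operatorname{Cl}(R)$). Then the minimal number of generators of $L^{(i)}$ is $$\mu(L^{(i)})=\binom{n-i+d-1}{d-1}=\frac{(n+d-i-1)!}{(d-1)!\,(n-i)!}\quad\text{for } i=1,\dots,n-1,$$ i.e., the number of monomials of degree $n-i$ in $d$ variables.
   Context: The $n$-th Veronese subring $S^{(n)}$ is the subring of $S$ consisting of power series all of whose monomials have degree divisible by $n$ (the subring generated by monomials of degree $n$); it is a complete Cohen-Macaulay normal local domain with isolated singularity. For a normal domain $R$, $\operatorname{Cl}(R)$ is the group of isomorphism classes of rank one reflexive $R$-modules, with $[\operatorname{Hom}_R(I,J)]=[J]-[I]$. *)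

(* Formal power series in d variables over a field k,
   represented as coefficient functions on exponent vectors. *)
From Stdlib Require List.
From mathcomp Require Import all_boot all_order all_algebra.
Set Implicit Arguments. Unset Strict Implicit. Unset Printing Implicit Defensive.
Import GRing.Theory.
Local Open Scope ring_scope.

Section PS.
Variables (k : fieldType) (d : nat).

Definition mon := {ffun 'I_d -> nat}.
Definition deg (a : mon) : nat := (\sum_(j < d) a j)%N.

Definition ps := mon -> k.

Definition pszero : ps := fun _ => 0.
Definition psadd (f g : ps) : ps := fun a => f a + g a.
(* Cauchy product: (fg)_a = sum_{b <= a} f_b g_{a-b} *)
Definition psmul (f g : ps) : ps := fun a =>
  \sum_(b : {ffun 'I_d -> 'I_(deg a).+1} | [forall j, (b j <= a j)%N])
     f [ffun j => nat_of_ord (b j)] * g [ffun j => (a j - b j)%N].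
Definition psone : ps := fun a => if deg a == 0%N then 1 else 0.
(* the variable x_1 (index 0) *)
Definition x1 : ps := fun a => if a == [ffun j : 'I_d => (nat_of_ord j == 0%N) : nat]
                               then 1 else 0.

Definition veronese (n : nat) (f : ps) : Prop := forall a, f a != 0 -> (n %| deg a)%N.

Definition pssum (s : seq ps) : ps := foldr psadd pszero s.

Definition span (R G : ps -> Prop) (f : ps) : Prop :=
  exists s : seq (ps * ps), (forall p, List.In p s -> R p.1 /\ G p.2) /\
    f = pssum [seq psmul p.1 p.2 | p <- s].

Fixpoint prodset (I : ps -> Prop) (i : nat) : ps -> Prop :=
  match i with
  | 0 => fun f => f = psone
  | i'.+1 => fun f => exists g h, prodset I i' g /\ I h /\ f = psmul g h
  end.

Definition idealpow (R I : ps -> Prop) (i : nat) : ps -> Prop := span R (prodset I i).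

(* symbolic power P^(i) = P^i R_P \cap R of a prime ideal P of R *)
Definition sympow (R P : ps -> Prop) (i : nat) (f : ps) : Prop :=
  R f /\ exists s, R s /\ ~ P s /\ idealpow R P i (psmul s f).

Definition generated_by (R M : ps -> Prop) (s : seq ps) : Prop :=
  forall f, M f <-> span R (fun g => List.In g s) f.
Definition min_num_gens (R M : ps -> Prop) (m : nat) : Prop :=
  (exists s, size s = m /\ (forall g, List.In g s -> M g) /\ generated_by R M s) /\
  (forall s, (forall g, List.In g s -> M g) -> generated_by R M s -> (m <= size s)%N).

End PS.

(* Over [R], the symbolic power [L^(i)] is the monomial module of the series in
   [R] whose terms are all divisible by [x_1^i] (by [x_1^(n i)] when [d = 1]).
   One inclusion holds because the [x_1]-adic order is additive and an element of
   [R] outside [L] has a term prime to [x_1]; for the other, a pure power of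
   another variable is such an element. A monomial [R]-module is minimally
   generated by its minimal monomials, read off modulo the maximal ideal; here
   these are the monomials of degree [n] divisible by [x_1^i], i.e. [x_1^i] times
   the monomials of degree [n - i]. *)

From Pilot Require Import Defs.
From mathcomp Require Import all_boot all_order all_algebra.
From mathcomp Require Import mpoly zify.
From Stdlib Require Import Classical FunctionalExtensionality Wf_nat Lia.
Set Implicit Arguments. Unset Strict Implicit. Unset Printing Implicit Defensive.
Import GRing.Theory.
Local Open Scope ring_scope.

Lemma list_InP (T : eqType) (x : T) s : reflect (List.In x s) (x \in s).
Proof.
elim: s => [|y s IH] /=; first by constructor.
rewrite in_cons; apply: (iffP orP) => [[/eqP->|/IH]|[->|/IH]]; auto.
Qed.

Lemma ex_min_nat (P : nat -> Prop) :
  (exists m, P m) -> exists2 m, P m & forall m', P m' -> (m <= m')%N.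
Proof.
move=> /(dec_inh_nat_subset_has_unique_least_element _ (fun m => classic (P m))).
by case=> m [[Pm min_m] _]; exists m => // m' /min_m/leP.
Qed.

Section Monomials.
Variable d : nat.
Implicit Types a b c : mon d.

Definition madd a b : mon d := [ffun j => (a j + b j)%N].
Definition msub a b : mon d := [ffun j => (a j - b j)%N].
Definition mle a b : bool := [forall j, (a j <= b j)%N].
Definition mzero : mon d := [ffun => 0%N].
Definition unitv (j : 'I_d) : mon d := [ffun l => (l == j : nat)].
Definition mscale (m : nat) a : mon d := [ffun j => (m * a j)%N].

Lemma mleP a b : reflect (forall j, a j <= b j)%N (mle a b).
Proof. exact: forallP. Qed.

Lemma maddC a b : madd a b = madd b a.
Proof. by apply/ffunP=> j; rewrite !ffunE addnC. Qed.

Lemma maddK a b : msub (madd a b) b = a.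
Proof. by apply/ffunP=> j; rewrite !ffunE addnK. Qed.

Lemma msubK a b : mle b a -> madd (msub a b) b = a.
Proof. by move/mleP=> h; apply/ffunP=> j; rewrite !ffunE subnK. Qed.

Lemma msub0 a : msub a mzero = a.
Proof. by apply/ffunP=> j; rewrite !ffunE subn0. Qed.

Lemma mle0 a : mle mzero a.
Proof. by apply/mleP=> j; rewrite ffunE. Qed.

Lemma mle_addl a b : mle b (madd a b).
Proof. by apply/mleP=> j; rewrite ffunE leq_addl. Qed.

Lemma mle_subr a b : mle (msub a b) a.
Proof. by apply/mleP=> j; rewrite ffunE leq_subr. Qed.

Lemma mle_add_sub a b c : mle a c -> mle b (msub c a) -> mle (madd b a) c.
Proof.
move=> /mleP le_ac /mleP le_b; apply/mleP => j.
by move: (le_ac j) (le_b j); rewrite !ffunE; lia.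
Qed.

Lemma deg_madd a b : deg (madd a b) = (deg a + deg b)%N.
Proof. by rewrite /deg -big_split /=; apply: eq_bigr => j _; rewrite ffunE. Qed.

Lemma deg_msub a b : mle b a -> deg (msub a b) = (deg a - deg b)%N.
Proof. by move=> h; rewrite -{2}(msubK h) deg_madd addnK. Qed.

Lemma deg_mscale m a : deg (mscale m a) = (m * deg a)%N.
Proof. by rewrite /deg big_distrr; apply: eq_bigr => j _; rewrite ffunE. Qed.

Lemma deg_unitv j : deg (unitv j) = 1%N.
Proof.
rewrite /deg (bigD1 j) //= big1 ?ffunE ?eqxx // => l hl.
by rewrite ffunE (negbTE hl).
Qed.

Lemma mle_unitv j c : mle (unitv j) c = (0 < c j)%N.
Proof.
apply/mleP/idP => [/(_ j)|h l]; first by rewrite ffunE eqxx.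
by rewrite ffunE; case: eqP => [->|].
Qed.

Lemma leq_coord_deg a j : (a j <= deg a)%N.
Proof. by rewrite /deg (bigD1 j) //= leq_addr. Qed.

Lemma mle_deg a b : mle a b -> (deg a <= deg b)%N.
Proof. by move/mleP=> h; rewrite /deg; apply: leq_sum => j _. Qed.

Lemma deg_eq0 a : (deg a == 0%N) = (a == mzero).
Proof.
apply/idP/eqP => [h|->]; last by rewrite /deg big1 // => j _; rewrite ffunE.
apply/ffunP=> j; rewrite ffunE; apply/eqP; rewrite -leqn0 -(eqP h).
exact: leq_coord_deg.
Qed.

(* Greedy: increase the coordinate [z] first, as long as [c] allows it. *)
Lemma exists_mle_deg (z : 'I_d) c m : (m <= deg c)%N ->
  exists b, [/\ mle b c, deg b = m & (minn (c z) m <= b z)%N].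
Proof.
elim: m => [|m IH] hm.
  by exists mzero; rewrite mle0 minn0; split=> //; apply/eqP; rewrite deg_eq0.
have [b [le_bc deg_b le_bz]] := IH (ltnW hm).
have [j [lt_bcj z_first]] : exists j, (b j < c j)%N /\ ((b z < c z)%N -> j = z).
  case: (ltnP (b z) (c z)) => hz; first by exists z.
  apply: NNPP => no_j; move: hm; rewrite -deg_b ltnNge; apply/negP/negPn.
  rewrite /deg; apply: leq_sum => j _; rewrite leqNgt; apply/negP => hj.
  by apply: no_j; exists j; split=> // h; move: hz; rewrite leqNgt h.
exists (madd b (unitv j)); split.
- apply/mleP => l; rewrite !ffunE; case: eqP => [->|_]; first by rewrite addn1.
  by rewrite addn0; move/mleP: le_bc.
- by rewrite deg_madd deg_unitv deg_b addn1.
- by rewrite !ffunE; case: (ltnP (b z) (c z)) => hz; [rewrite (z_first hz) eqxx|]; lia.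
Qed.

Definition mons_of_deg m : seq (mon d) :=
  [seq [ffun j => x j] | x : 'X_{1..d} <- [seq s2m t | t : m.-tuple 'I_d <- enum (basis d m)]].

Lemma mem_mons_of_deg m c : (c \in mons_of_deg m) = (deg c == m).
Proof.
apply/mapP/eqP => [[x] | <-].
  rewrite -basis_cover => /eqP <- ->.
  by rewrite mdegE /deg; apply: eq_bigr => j _; rewrite ffunE.
exists [multinom c j | j < d]; last by apply/ffunP => j; rewrite !ffunE mnmE.
by rewrite -basis_cover mdegE; apply/eqP; apply: eq_bigr => j _; rewrite mnmE.
Qed.

Lemma uniq_mons_of_deg m : uniq (mons_of_deg m).
Proof.
rewrite map_inj_uniq ?uniq_basis // => x y /ffunP e.
by apply/mnmP => j; move: (e j); rewrite !ffunE.
Qed.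

Definition lexlt a b :=
  exists2 j : 'I_d, (forall l : 'I_d, (l < j)%N -> a l = b l) & (a j < b j)%N.
Definition lexle a b := a = b \/ lexlt a b.

Lemma exists_lexmin (P : mon d -> Prop) :
  (exists a, P a) -> exists2 a, P a & forall b, P b -> lexle a b.
Proof.
move=> [a0 Pa0].
pose agree (K : nat) a b := forall l : 'I_d, (l < K)%N -> a l = b l.
suff /(_ d (leqnn d)) [a Pa min_a] : forall K, (K <= d)%N ->
    exists2 a, P a & forall b, P b -> agree K a b \/ lexlt a b.
  exists a => // b /min_a [agree_ab|]; [left | by right].
  by apply/ffunP => l; apply: agree_ab.
elim=> [_|K IH lt_Kd]; first by exists a0 => // b _; left.
have [a Pa min_a] := IH (ltnW lt_Kd).
pose kK := Ordinal lt_Kd.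
have [m [b0 [Pb0 a_b0] <-] min_b0] :=
  ex_min_nat (P := fun m => exists2 b, P b /\ agree K a b & b kK = m)
    (ex_intro _ (a kK) (ex_intro2 _ _ a (conj Pa (fun _ _ => erefl)) erefl)).
exists b0 => // b Pb.
have agree_b0 (l : 'I_d) : (l < K)%N -> b0 l = a l by move=> hl; rewrite a_b0.
have [agree_ab | [j a_b lt_ab]] : agree K a b \/ exists2 j : 'I_d,
    agree j a b & ((j < K)%N && (a j < b j)%N).
- case: (min_a b Pb) => [|[j a_b lt_ab]]; first by left.
  case: (ltnP j K) => [ltjK|leKj]; last by left=> l hl; apply/a_b/(leq_trans hl).
  by right; exists j; rewrite ?ltjK.
- have : (b0 kK <= b kK)%N by apply: min_b0; exists b.
  rewrite leq_eqVlt => /orP [/eqP e|lt]; last first.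
    by right; exists kK => // l hl; rewrite agree_b0 ?agree_ab.
  left=> l; rewrite ltnS leq_eqVlt => /orP [/eqP e'|hl].
    by have -> : l = kK by apply: val_inj.
  by rewrite agree_b0 ?agree_ab.
- case/andP: lt_ab => ltjK lt_ab; right; exists j; last by rewrite agree_b0.
  by move=> l hl; rewrite agree_b0 ?a_b // (ltn_trans hl).
Qed.

Lemma lexle_madd_eq a b a' b' :
  lexle a a' -> lexle b b' -> madd a b = madd a' b' -> a = a'.
Proof.
move=> [//|[j1 a_a' lt1]] le_bb' /ffunP e.
have {}e j : (a j + b j = a' j + b' j)%N by move: (e j); rewrite !ffunE.
case: le_bb' => [eb|[j2 b_b' lt2]].
  by apply/ffunP=> j; move: (e j); rewrite eb => /addIn.
exfalso; case: (leqP j1 j2) => hj.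
  have le_b1 : (b j1 <= b' j1)%N.
    move: hj; rewrite leq_eqVlt => /orP [/eqP hj|hj]; last by rewrite b_b'.
    suff -> : j1 = j2 by exact: ltnW.
    exact: val_inj.
  by have := leq_add lt1 le_b1; rewrite -e addSn ltnn.
by move: (e j2); rewrite a_a' // => /addnI e2; move: lt2; rewrite e2 ltnn.
Qed.

End Monomials.

Arguments mzero {d}.
Arguments mons_of_deg {d}.

Lemma size_mons_of_deg d m : size (@mons_of_deg d.+1 m) = 'C(m + d, m).
Proof. by rewrite size_map size_basis. Qed.

Section PowerSeries.
Variables (k : fieldType) (d : nat).
Local Notation ps := (ps k d).
Local Notation mon := (mon d).
Local Notation psone := (@psone k d).
Local Notation pszero := (@pszero k d).
Implicit Types (f g r s : ps) (a b c : mon).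

Lemma psmulE f g c : psmul f g c =
  \sum_(b : {ffun 'I_d -> 'I_(deg c).+1} | [forall j, (b j <= c j)%N])
     f [ffun j => nat_of_ord (b j)] * g (msub c [ffun j => nat_of_ord (b j)]).
Proof. by apply: eq_bigr => b _; congr (_ * g _); apply/ffunP=> j; rewrite !ffunE. Qed.

Lemma psmul_coef_eq0 f g c :
  (forall b, mle b c -> f b * g (msub c b) = 0) -> psmul f g c = 0.
Proof.
move=> h; rewrite psmulE big1 // => b /forallP hb; apply: h.
by apply/mleP=> j; rewrite ffunE.
Qed.

Lemma psmul_coef_single f g c b0 : mle b0 c ->
  (forall b, mle b c -> b != b0 -> f b * g (msub c b) = 0) ->
  psmul f g c = f b0 * g (msub c b0).
Proof.
move=> /mleP le_b0c h; rewrite psmulE.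
have lt_b0 j : (b0 j < (deg c).+1)%N by rewrite ltnS (leq_trans (le_b0c j)) ?leq_coord_deg.
pose bb : {ffun 'I_d -> 'I_(deg c).+1} := [ffun j => Ordinal (lt_b0 j)].
rewrite (bigD1 bb) /=; last by apply/forallP=> j; rewrite ffunE /= le_b0c.
have -> : [ffun j => nat_of_ord (bb j)] = b0 by apply/ffunP=> j; rewrite !ffunE.
rewrite big1 ?addr0 // => b /andP [/forallP le_bc ne_b]; apply: h.
  by apply/mleP=> j; rewrite ffunE.
apply: contra ne_b => /eqP/ffunP e; apply/eqP/ffunP=> j; apply: val_inj.
by move: (e j); rewrite !ffunE.
Qed.

Lemma psmul_coef_neq0 f g c : psmul f g c != 0 ->
  exists b, [/\ mle b c, f b != 0 & g (msub c b) != 0].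
Proof.
move=> h; apply: NNPP => no_b; move/eqP: h; apply; apply: psmul_coef_eq0 => b hb.
apply/eqP; apply: contraT; rewrite mulf_eq0 negb_or => /andP [fb gb].
by case: no_b; exists b.
Qed.

Definition psX a : ps := fun c => if c == a then 1 else 0.

Lemma psmul_psXl f a c :
  psmul (psX a) f c = if mle a c then f (msub c a) else 0.
Proof.
case: ifP => ha.
  rewrite (psmul_coef_single (b0 := a)) //; first by rewrite /psX eqxx mul1r.
  by move=> b _ ne_ba; rewrite /psX (negbTE ne_ba) mul0r.
apply: psmul_coef_eq0 => b hb; rewrite /psX; case: eqP; rewrite ?mul0r // => e.
by move: ha; rewrite -e hb.
Qed.

Lemma psmul_psXr f a c :
  psmul f (psX a) c = if mle a c then f (msub c a) else 0.
Proof.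
have sub_subK b : mle b c -> msub c (msub c b) = b.
  by move/mleP=> h; apply/ffunP=> j; rewrite !ffunE subKn.
case: ifP => ha.
  rewrite (psmul_coef_single (b0 := msub c a)) ?mle_subr //.
    by rewrite sub_subK // /psX eqxx mulr1.
  move=> b hb ne_b; rewrite /psX; case: eqP; rewrite ?mulr0 // => e.
  by case/eqP: ne_b; rewrite -e sub_subK.
apply: psmul_coef_eq0 => b hb; rewrite /psX; case: eqP; rewrite ?mulr0 // => e.
by move: ha; rewrite -e mle_subr.
Qed.

Lemma psX_mul a b : psmul (psX a) (psX b) = psX (madd a b).
Proof.
apply: functional_extensionality => c; rewrite psmul_psXl /psX.
case: ifP => ha.
  congr (if _ then _ else _); apply/eqP/eqP => [<-|->]; first by rewrite maddC msubK.
  by rewrite maddC maddK.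
by case: eqP => // e; move: ha; rewrite e maddC mle_addl.
Qed.

Lemma psone_psX : psone = psX mzero.
Proof. by apply: functional_extensionality => c; rewrite /psone /psX deg_eq0. Qed.

Lemma psmul1 f : psmul psone f = f.
Proof.
by apply: functional_extensionality => c; rewrite psone_psX psmul_psXl mle0 msub0.
Qed.

Definition supp_in (P : pred mon) f := forall c, f c != 0 -> P c.

Lemma supp_in0 P : supp_in P pszero.
Proof. by move=> c; rewrite /pszero eqxx. Qed.

Lemma supp_in_add P f g : supp_in P f -> supp_in P g -> supp_in P (psadd f g).
Proof.
move=> hf hg c; rewrite /psadd; case: (eqVneq (f c) 0) => [->|/hf //].
by rewrite add0r => /hg.
Qed.

Lemma supp_in_mul (Pf Pg Pfg : pred mon) f g :
  (forall b c, mle b c -> Pf b -> Pg (msub c b) -> Pfg c) ->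
  supp_in Pf f -> supp_in Pg g -> supp_in Pfg (psmul f g).
Proof. by move=> H hf hg c /psmul_coef_neq0 [b [hb /hf fb /hg gb]]; apply: (H b). Qed.

Lemma supp_in_mul_order (z : 'I_d) i j f g :
  supp_in (fun c => i <= c z)%N f -> supp_in (fun c => j <= c z)%N g ->
  supp_in (fun c => i + j <= c z)%N (psmul f g).
Proof.
apply: supp_in_mul => b c /mleP le_bc; rewrite ffunE.
by have := le_bc z; lia.
Qed.

Lemma supp_in_psX (P : pred mon) a : P a -> supp_in P (psX a).
Proof. by move=> Pa c; rewrite /psX; case: (eqVneq c a) => [-> //|_]; rewrite eqxx. Qed.

Lemma pssum_coef (s : seq (ps * ps)) c :
  pssum [seq psmul p.1 p.2 | p <- s] c = \sum_(p <- s) psmul p.1 p.2 c.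
Proof. by elim: s => [|p s IH]; rewrite ?big_nil ?big_cons //= /psadd IH. Qed.

Lemma span_supp_in (R G : ps -> Prop) (P : pred mon) f :
  (forall r g, R r -> G g -> supp_in P (psmul r g)) -> Defs.span R G f -> supp_in P f.
Proof.
move=> H [s [hs ->]]; elim: s hs => [|p s IH] hs /=; first exact: supp_in0.
apply: supp_in_add; last by apply: IH => q hq; apply: hs; right.
by case: (hs p (or_introl erefl)); apply: H.
Qed.

Lemma span_sub (R G G' : ps -> Prop) f :
  (forall g, G g -> G' g) -> Defs.span R G f -> Defs.span R G' f.
Proof.
move=> H [s [hs e]]; exists s; split => // p /hs [? ?]; split => //; exact: H.
Qed.

(* The [z]-adic order is additive: compare the coefficients of [s f] and of
   the product of the lexicographically least terms of minimal [z]-degree. *)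
Lemma supp_in_mul_cancel (z : 'I_d) m s f : (exists2 a, s a != 0 & a z = 0%N) ->
  supp_in (fun c => m <= c z)%N (psmul s f) -> supp_in (fun c => m <= c z)%N f.
Proof.
move=> [a0 sa0 a0z] hsf c0 fc0; rewrite leqNgt; apply/negP => lt_c0.
have ex_j : exists j c, f c != 0 /\ c z = j by exists (c0 z), c0.
have [j0 [c [fc cz]] min_j0] := ex_min_nat ex_j.
have le_j0 : (j0 <= c0 z)%N by apply: min_j0; exists c0.
have ex_a : exists a, s a != 0 /\ a z = 0%N by exists a0.
have [a [sa az] min_a] := exists_lexmin ex_a.
have ex_b : exists b, f b != 0 /\ b z = j0 by exists c.
have [b [fb bz] min_b] := exists_lexmin ex_b.
have coef_ab : psmul s f (madd b a) = s a * f b.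
  rewrite (psmul_coef_single (b0 := a)) ?maddK ?mle_addl //.
  move=> a' le_a' ne_a'; apply/eqP; apply: contraT; rewrite mulf_eq0 negb_or.
  move=> /andP [sa' fb']; set b' := msub _ a' in fb'.
  have e : madd b' a' = madd b a by rewrite msubK.
  clearbody b'.
  have /ffunP/(_ z) := e; rewrite !ffunE az bz addn0 => ez.
  have le_b'z : (j0 <= b' z)%N by apply: min_j0; exists b'.
  have a'z : a' z = 0%N by lia.
  have b'z : b' z = j0 by lia.
  case/eqP: ne_a'; symmetry; move: e; rewrite maddC [madd b a]maddC => e.
  exact: lexle_madd_eq (min_a a' (conj sa' a'z)) (min_b b' (conj fb' b'z)) (esym e).
have := hsf (madd b a); rewrite coef_ab mulf_neq0 // ffunE az bz addn0 => /(_ isT).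
by rewrite leqNgt (leq_ltn_trans le_j0).
Qed.

End PowerSeries.

Section MonomialModules.
Variables (k : fieldType) (d n : nat).
Local Notation ps := (ps k d).
Local Notation mon := (mon d).
Local Notation R := (veronese (k := k) (d := d) n).
Implicit Types (f g r : ps) (a b c t : mon).

Lemma veronese_mul f g : R f -> R g -> R (psmul f g).
Proof.
apply: supp_in_mul => b c le_bc; rewrite deg_msub // => nb nc.
by rewrite -(subnKC (mle_deg le_bc)) dvdn_add.
Qed.

(* Each term of [f] is attributed to the first monomial of [T] dividing it. *)
Lemma span_psX (T : seq mon) f : uniq T -> (forall t, t \in T -> n %| deg t)%N ->
  R f -> (forall c, f c != 0 -> has (fun t => mle t c) T) ->
  Defs.span R (fun g => List.In g [seq psX k t | t <- T]) f.
Proof.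
move=> uniq_T dvd_T Rf cover_T.
pose first c := nth mzero T (find (fun t => mle t c) T).
pose r t : ps := fun x => if first (madd x t) == t then f (madd x t) else 0.
exists [seq (r t, psX k t) | t <- T]; split.
  move=> p /List.in_map_iff [t [<- tT]]; split; last by apply/List.in_map_iff; exists t.
  move=> x; rewrite /= /r; cbv beta; case: ifP => [_ fx|_]; last by rewrite eqxx.
  by have := Rf _ fx; rewrite deg_madd dvdn_addl // dvd_T //; apply/list_InP.
apply: functional_extensionality => c; rewrite pssum_coef big_map /=.
under eq_bigr => t _ do rewrite psmul_psXr /r.
have [fc0|fc] := eqVneq (f c) 0.
  by rewrite big1 // => t _; case: ifP => // le_tc; rewrite msubK // fc0 if_same.
have first_T : first c \in T by rewrite mem_nth // -has_find cover_T.
have first_c : mle (first c) c := nth_find mzero (cover_T _ fc).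
rewrite (bigD1_seq (first c)) //= first_c msubK // eqxx big1_seq ?addr0 //.
move=> t /andP [ne_t _]; case: ifP => // le_tc.
by rewrite msubK // eq_sym (negbTE ne_t).
Qed.

Section MinimalMonomials.
Variables (P : pred mon) (T : seq mon).
Hypotheses (P_dvd : forall c, P c -> (n %| deg c)%N)
  (P_mul : forall b c, (n %| deg b)%N -> P c -> P (madd b c))
  (uniq_T : uniq T) (T_P : {subset T <= P})
  (T_cover : forall c, P c -> has (fun t => mle t c) T)
  (T_min : forall t b, t \in T -> mle b t -> (n %| deg b)%N -> b != mzero ->
     ~~ P (msub t b)).

Lemma supp_in_mul_psX r t : R r -> t \in T -> supp_in P (psmul r (psX k t)).
Proof.
move=> Rr tT c; rewrite psmul_psXr; case: ifP => [le_tc /Rr dvd_ct|]; last by rewrite eqxx.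
by rewrite -(msubK le_tc); apply: P_mul => //; apply: T_P.
Qed.

Definition coefs f : 'rV[k]_(size T) := \row_(j < size T) f (nth mzero T j).

Definition series_of (v : 'rV[k]_(size T)) : ps :=
  fun c => \sum_(j < size T) (if c == nth mzero T j then v 0 j else 0).

(* Only the constant term of [r] reaches the minimal monomials of [g]. *)
Lemma coefs_mul r g : R r -> supp_in P g -> coefs (psmul r g) = r mzero *: coefs g.
Proof.
move=> Rr Pg; apply/rowP => j; rewrite !mxE.
have /T_min : nth mzero T j \in T by rewrite mem_nth.
move: (nth _ _ _) => t t_min.
rewrite (psmul_coef_single (b0 := mzero)) ?mle0 ?msub0 // => b le_bt nz_b.
apply/eqP; rewrite mulf_eq0; have [//|/Rr dvd_b] := eqVneq (r b) 0.
by apply/orP; right; apply: contraNT (t_min _ le_bt dvd_b nz_b) => /Pg.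
Qed.

Lemma coefs_span (s : seq ps) (l : seq (ps * ps)) :
  (forall g, List.In g s -> supp_in P g) ->
  (forall p, List.In p l -> R p.1 /\ List.In p.2 s) ->
  coefs (pssum [seq psmul p.1 p.2 | p <- l]) \in <<[seq coefs g | g <- s]>>%VS.
Proof.
move=> Ps; elim: l => [|p l IH] hl /=.
  by rewrite (_ : coefs _ = 0) ?mem0v //; apply/rowP => j; rewrite !mxE.
have -> : forall f g, coefs (psadd f g) = coefs f + coefs g.
  by move=> f g; apply/rowP => j; rewrite !mxE.
apply: memvD; last by apply: IH => q hq; apply: hl; right.
have [Rp1 sp2] := hl p (or_introl erefl).
rewrite coefs_mul //; last exact: Ps.
apply/(memvZ (p.1 mzero))/memv_span/list_InP/List.in_map_iff; by exists p.2.
Qed.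

Lemma supp_in_series_of v : supp_in P (series_of v).
Proof.
move=> c; apply: contraR => Pc; rewrite /series_of big1 // => j _.
by case: eqP => // e; case/negP: Pc; rewrite e; apply/T_P/mem_nth.
Qed.

Lemma series_ofK v : coefs (series_of v) = v.
Proof.
apply/rowP => j; rewrite mxE /series_of (bigD1 j) //= eqxx big1 ?addr0 // => l ne_lj.
rewrite nth_uniq //; case: eqP => // /val_inj e.
by move: ne_lj; rewrite e eqxx.
Qed.

(* Modulo the maximal ideal of [R], any generators must span all coefficient
   vectors on [T]. *)
Theorem min_num_gens_monomial (M : ps -> Prop) :
  (forall f, M f <-> supp_in P f) -> min_num_gens R M (size T).
Proof.
move=> ME; split.
  exists [seq psX k t | t <- T]; rewrite size_map; split=> //; split.
    by move=> g /List.in_map_iff [t [<- /list_InP tT]]; apply/ME/supp_in_psX/T_P.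
  move=> f; rewrite ME; split => [Pf|].
    by apply: span_psX => // [t /T_P /P_dvd | c /Pf /P_dvd | c /Pf /T_cover].
  apply: span_supp_in => r g Rr /List.in_map_iff [t [<- /list_InP]].
  exact: supp_in_mul_psX.
move=> s sM gen_s.
have sP g : List.In g s -> supp_in P g by move=> /sM/ME.
have : (fullv <= <<[seq coefs g | g <- s]>>)%VS.
  apply/subvP => v _; rewrite -(series_ofK v).
  have [l [hl ->]] := (gen_s (series_of v)).1 ((ME _).2 (@supp_in_series_of v)).
  exact: coefs_span.
move/dimvS; rewrite dimvf dim_matrix mul1r => /leq_trans; apply.
by rewrite (leq_trans (dim_span _)) ?size_map.
Qed.

End MinimalMonomials.
End MonomialModules.

Section X1Ideal.
Variables (k : fieldType) (d n : nat).
Local Notation ps := (ps k d.+1).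
Local Notation mon := (mon d.+1).
Local Notation R := (veronese (k := k) (d := d.+1) n).
Local Notation psone := (@psone k d.+1).
Local Notation z := (@ord0 d).
Implicit Types (f g s : ps) (a b c q : mon).

Definition x1_ideal f : Prop := R f /\ exists g, f = psmul (@x1 k d.+1) g.

Lemma x1E : @x1 k d.+1 = psX k (unitv z).
Proof. by congr psX; apply/ffunP => j; rewrite !ffunE. Qed.

Lemma x1_idealE f : x1_ideal f <-> R f /\ supp_in (fun c => 0 < c z)%N f.
Proof.
split=> [[Rf [g def_f]]|[Rf f_z]]; split => //.
  by move=> c; rewrite def_f x1E psmul_psXl mle_unitv; case: ifP => // _; rewrite eqxx.
exists (fun x => f (madd x (unitv z))); apply: functional_extensionality => c.
rewrite x1E psmul_psXl mle_unitv; case: ifP => [c_z|]; first by rewrite msubK ?mle_unitv.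
by apply: contraFeq => /f_z.
Qed.

Lemma x1_ideal_psX a : deg a = n -> (0 < a z)%N -> x1_ideal (psX k a).
Proof.
by move=> deg_a a_z; apply/x1_idealE; split; apply: supp_in_psX => //=; rewrite deg_a.
Qed.

Lemma prodset_psX b q j : deg b = n -> (0 < b z)%N -> deg q = n -> (0 < q z)%N ->
  prodset x1_ideal j.+1 (psX k (madd b (mscale j q))).
Proof.
move=> deg_b b_z deg_q q_z; elim: j => [|j IH].
  exists psone, (psX k b); split=> //; split; first exact: x1_ideal_psX.
  by rewrite psmul1; congr psX; apply/ffunP => l; rewrite !ffunE mul0n addn0.
exists (psX k (madd b (mscale j q))), (psX k q); split=> //; split; first exact: x1_ideal_psX.
by rewrite psX_mul; congr psX; apply/ffunP => l; rewrite !ffunE mulSn; lia.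
Qed.

Lemma prodset_supp_in t j f : (forall g, x1_ideal g -> supp_in (fun c => t <= c z)%N g) ->
  prodset x1_ideal j f -> supp_in (fun c => t * j <= c z)%N f.
Proof.
move=> L_t; elim: j f => [|j IH] f /=; first by move=> -> c _; rewrite muln0.
move=> [g [h [g_j [L_h ->]]]]; rewrite mulnSr.
exact: supp_in_mul_order (IH _ g_j) (L_t _ L_h).
Qed.

(* An element of [R] outside [L] has a term not divisible by [x_1], and
   multiplying by it does not lower the [x_1]-adic order. *)
Lemma sympow_supp_in t i f : (forall g, x1_ideal g -> supp_in (fun c => t <= c z)%N g) ->
  sympow R x1_ideal i f -> supp_in (fun c => t * i <= c z)%N f.
Proof.
move=> L_t [Rf [s [Rs [s_notL sf_i]]]]; apply: (supp_in_mul_cancel (s := s)).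
  apply: NNPP => no_a; apply: s_notL; apply/x1_idealE; split => // c sc.
  by rewrite lt0n; apply/negP => /eqP c_z; apply: no_a; exists c.
apply: (span_supp_in _ sf_i) => r g _ /(prodset_supp_in L_t) g_ti.
have r_0 : supp_in (fun c => 0 <= c z)%N r by [].
exact: supp_in_mul_order r_0 g_ti.
Qed.

Lemma sympow_of_psX i a f : R f -> (n %| deg a)%N -> a z = 0%N ->
  idealpow R x1_ideal i (psmul (psX k a) f) -> sympow R x1_ideal i f.
Proof.
move=> Rf dvd_a a_z af_i; split => //; exists (psX k a); split.
  by apply: supp_in_psX.
split => // /x1_idealE [_ /(_ a)]; rewrite /psX eqxx oner_neq0 a_z.
by move=> /(_ isT).
Qed.

End X1Ideal.

Section SeveralVariables.
Variables (k : fieldType) (d n i : nat).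
Hypotheses (i_gt0 : (0 < i)%N) (i_le_n : (i <= n)%N).
Local Notation ps := (ps k d.+2).
Local Notation mon := (mon d.+2).
Local Notation R := (veronese (k := k) (d := d.+2) n).
Local Notation L := (@x1_ideal k d.+1 n).
Local Notation z := (@ord0 d.+1).
Local Notation o := (@ord_max d.+1).
Implicit Types (f : ps) (a b c t : mon).

Let P : pred mon := fun c => (n %| deg c)%N && (i <= c z)%N.

Lemma n_le_deg c : P c -> (n <= deg c)%N.
Proof.
case/andP => dvd_c i_c; apply: dvdn_leq dvd_c.
exact: leq_trans i_gt0 (leq_trans i_c (leq_coord_deg c z)).
Qed.

(* Multiplying by the unit [x_o^(n(i-1))] of [R_L] makes every term of an element of
   [L^(i)] divisible by a product [b (x_1 x_o^(n-1))^(i-1)] of [i] monomials of [L]. *)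
Let q : mon := madd (unitv z) (mscale (n - 1) (unitv o)).
Let Q : mon := mscale (i - 1) q.
Let w : mon := mscale (n * (i - 1)) (unitv o).
Let T : seq mon := [seq madd b Q | b <- [seq b : mon <- mons_of_deg n | (0 < b z)%N]].

Lemma deg_q : deg q = n.
Proof. by rewrite deg_madd deg_mscale !deg_unitv; lia. Qed.

Lemma cover_T c : P c -> has (fun t => mle t (madd c w)) T.
Proof.
move=> Pc; have /andP [_ i_c] := Pc.
have le_Qcw : mle Q (madd c w).
  apply/mleP => l; rewrite !ffunE.
  case: (eqVneq l z) => [->|lz] /=; first by lia.
  by case: (eqVneq l o) => [->|lo] /=; rewrite ?(negbTE lz) ?(negbTE lo) /=; nia.
have deg_cwQ : deg (msub (madd c w) Q) = deg c.
  by rewrite deg_msub // deg_madd !deg_mscale deg_q deg_unitv; lia.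
have n_le : (n <= deg (msub (madd c w) Q))%N by rewrite deg_cwQ n_le_deg.
have [b [le_b deg_b b_z]] := exists_mle_deg z n_le.
apply/hasP; exists (madd b Q); last exact: mle_add_sub.
apply/mapP; exists b => //; rewrite mem_filter mem_mons_of_deg deg_b eqxx andbT.
by move: b_z; rewrite !ffunE /=; lia.
Qed.

Lemma sympow_severalE f : sympow R L i f <-> supp_in P f.
Proof.
split => [sym_f | P_f].
  have f_i := sympow_supp_in (t := 1) (fun g gL => ((x1_idealE n g).1 gL).2) sym_f.
  by move=> c fc; rewrite /P (sym_f.1 c fc) -[i]mul1n f_i.
have R_f : R f by move=> c /P_f /andP [].
apply: (sympow_of_psX (a := w)) => //.
- by rewrite deg_mscale deg_unitv muln1 dvdn_mulr.
- by rewrite !ffunE muln0.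
apply: span_sub (span_psX (T := T) _ _ _ _).
- move=> g /List.in_map_iff [t [<- /list_InP /mapP [b]]].
  rewrite mem_filter mem_mons_of_deg => /andP [b_z /eqP deg_b] ->.
  have -> : i = (i - 1).+1 by lia.
  by apply: prodset_psX; rewrite ?deg_q // !ffunE /=.
- rewrite map_inj_uniq ?filter_uniq ?uniq_mons_of_deg // => a b e.
  by rewrite -(maddK a Q) e maddK.
- move=> t /mapP [b]; rewrite mem_filter mem_mons_of_deg => /andP [_ /eqP deg_b] ->.
  by rewrite deg_madd deg_mscale deg_q deg_b dvdn_add // dvdn_mull.
- apply: veronese_mul R_f; apply: supp_in_psX.
  by rewrite /= deg_mscale deg_unitv muln1 dvdn_mulr.
move=> c; rewrite psmul_psXl; case: ifP => [le_wc /P_f|]; last by rewrite eqxx.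
by move/cover_T; rewrite msubK.
Qed.

Let N : seq mon := [seq madd a (mscale i (unitv z)) | a <- mons_of_deg (n - i)].

Lemma mem_N c : (c \in N) = (deg c == n) && (i <= c z)%N.
Proof.
have le_iz c' : mle (mscale i (unitv z)) c' = (i <= c' z)%N.
  apply/mleP/idP => [/(_ z)|i_c l]; first by rewrite !ffunE eqxx muln1.
  by rewrite !ffunE; case: (eqVneq l z) => [->|_]; rewrite ?muln1 ?muln0.
apply/mapP/andP => [[a]|[/eqP deg_c i_c]].
  rewrite mem_mons_of_deg => /eqP deg_a ->; rewrite deg_madd deg_mscale deg_unitv.
  by rewrite deg_a !ffunE eqxx; split; [apply/eqP|]; lia.
exists (msub c (mscale i (unitv z))); last by rewrite msubK // le_iz.
by rewrite mem_mons_of_deg deg_msub ?le_iz // deg_mscale deg_unitv deg_c muln1.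
Qed.

Theorem min_num_gens_several : min_num_gens R (sympow R L i) 'C(n - i + d.+1, n - i).
Proof.
rewrite -size_mons_of_deg -(size_map (fun a => madd a (mscale i (unitv z)))).
apply: (@min_num_gens_monomial k d.+2 n P N).
- by move=> c /andP [].
- move=> b c dvd_b /andP [dvd_c i_c]; rewrite /P deg_madd dvdn_add //= ffunE.
  exact: leq_trans i_c (leq_addl _ _).
- rewrite map_inj_uniq ?uniq_mons_of_deg // => a b e.
  by rewrite -(maddK a (mscale i (unitv z))) e maddK.
- by move=> t; rewrite mem_N unfold_in /P => /andP [/eqP -> ->]; rewrite dvdnn.
- move=> c Pc; have [b [le_bc deg_b b_z]] := exists_mle_deg z (n_le_deg Pc).
  apply/hasP; exists b => //; rewrite mem_N deg_b eqxx /=.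
  by case/andP: Pc => _; lia.
- move=> t b; rewrite mem_N => /andP [/eqP deg_t _] le_bt dvd_b nz_b.
  have : (n <= deg b)%N by rewrite dvdn_leq // lt0n deg_eq0.
  move: (mle_deg le_bt); rewrite deg_t => le_b le_b'.
  have /eqP -> : msub t b == mzero by rewrite -deg_eq0 deg_msub // deg_t; lia.
  by rewrite /P ffunE leqNgt i_gt0 andbF.
- exact: sympow_severalE.
Qed.

End SeveralVariables.

Section OneVariable.
Variables (k : fieldType) (n i : nat).
Hypotheses (n_gt0 : (0 < n)%N) (i_gt0 : (0 < i)%N).
Local Notation ps := (ps k 1).
Local Notation mon := (mon 1).
Local Notation R := (veronese (k := k) (d := 1) n).
Local Notation L := (@x1_ideal k 0 n).
Local Notation z := (@ord0 0).
Implicit Types (f : ps) (b c t : mon).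

Let P : pred mon := fun c => (n %| deg c)%N && (n * i <= c z)%N.
Let N : mon := mscale (n * i) (unitv z).

Lemma deg_one_var c : deg c = c z.
Proof. by rewrite /deg big_ord1. Qed.

Lemma sympow_oneE f : sympow R L i f <-> supp_in P f.
Proof.
split => [sym_f | P_f].
  have L_n g : L g -> supp_in (fun c => n <= c z)%N g.
    move=> /x1_idealE [R_g g_z] c gc; rewrite -deg_one_var dvdn_leq ?R_g //.
    by rewrite deg_one_var g_z.
  by move=> c fc; rewrite /P (sym_f.1 c fc) (sympow_supp_in L_n sym_f).
have R_f : R f by move=> c /P_f /andP [].
apply: (sympow_of_psX (a := mzero)) => //; rewrite ?deg_one_var ?ffunE ?dvdn0 //.
rewrite -psone_psX psmul1; apply: span_sub (span_psX (T := [:: N]) _ _ R_f _) => //.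
- move=> g [<-|[]]; have -> : i = (i - 1).+1 by lia.
  have -> : N = madd (mscale n (unitv z)) (mscale (i - 1) (mscale n (unitv z))).
    by apply/ffunP => l; rewrite !ffunE; nia.
  by apply: prodset_psX; rewrite ?deg_mscale ?deg_unitv ?muln1 // !ffunE eqxx muln1.
- by move=> t; rewrite inE => /eqP ->; rewrite deg_mscale deg_unitv muln1 dvdn_mulr.
- move=> c /P_f /andP [_ ni_c]; rewrite /= orbF; apply/mleP => l.
  by rewrite (ord1 l) !ffunE muln1.
Qed.

Theorem min_num_gens_one : min_num_gens R (sympow R L i) 1.
Proof.
apply: (@min_num_gens_monomial k 1 n P [:: N]) => //.
- by move=> c /andP [].
- move=> b c dvd_b /andP [dvd_c ni_c]; rewrite /P deg_madd dvdn_add //= ffunE.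
  exact: leq_trans ni_c (leq_addl _ _).
- move=> t; rewrite inE => /eqP ->.
  by rewrite unfold_in /P deg_one_var !ffunE eqxx muln1 dvdn_mulr /=.
- move=> c /andP [_ ni_c]; rewrite /= orbF; apply/mleP => l.
  by rewrite (ord1 l) !ffunE muln1.
- move=> t b; rewrite inE => /eqP -> /mleP /(_ z) le_b _; rewrite -deg_eq0 deg_one_var.
  move=> b_z; rewrite /P !ffunE eqxx muln1 negb_and; apply/orP; right.
  by move: le_b; rewrite !ffunE eqxx muln1; lia.
- exact: sympow_oneE.
Qed.

End OneVariable.

Theorem lemma3p18 (k : fieldType) (d n : nat) (hd : (0 < d)%N) (hn : (1 < n)%N) :
  let R := veronese (k := k) (d := d) n in
  let L := fun f : ps k d => R f /\ exists g : ps k d, f = psmul (@x1 k d) g in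
  forall i : nat, (1 <= i <= n - 1)%N ->
    min_num_gens R (sympow R L i) 'C(n - i + d - 1, d - 1).
Proof.
move=> R L i /andP [i_gt0 i_lt_n].
case: d hd @R @L => [//|[|d]] _ R L.
  by rewrite subnn bin0; apply: min_num_gens_one; lia.
have -> : (n - i + d.+2 - 1 = n - i + d.+1)%N by lia.
rewrite subSS subn0 -[in X in 'C(_, X)](addKn (n - i) d.+1) bin_sub ?leq_addr //.
by apply: min_num_gens_several; lia.
Qed.
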